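(* The sequence $(c_n)_{n\ge1}$ satisfies: (a) $c_{2^m+1}=m$ for every $m\ge0$; (b) $c_n<2^{\lceil\log_2 n\rceil}/3$ for every $n\ge1$; (c) $c_n<n/2$ for every $n\ge1$; (d) for every $m\ge1$ and every $p\in\{1,\dots,2^m-1\}$, $c_{2^m+p}=c_{2^{m+1}-p}$.
   Context: Bifurcating trees: rooted trees in which every internal node has exactly two children; $\mathcal{T}_n$ is the set of isomorphism classes of bifurcating trees with $n$ leaves. For a node $w$, $\kappa_T(w)$ is its number of descendant leaves. The Colless index is $\mathcal{C}(T)=\sum_{v}|\kappa_T(v_1)-\kappa_T(v_2)|$, summed over internal nodes $v$ with children $v_1,v_2$; $c_n=\min\{\mathcal{C}(T):T\in\mathcal{T}_n\}$. *)

From mathcomp Require Import all_boot.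
From Stdlib Require Import ClassicalEpsilon.
Set Implicit Arguments. Unset Strict Implicit. Unset Printing Implicit Defensive.

(* Rooted bifurcating trees (as plane trees; isomorphism classes are obtained
   by forgetting the order of the two children, which affects neither the
   number of leaves nor the Colless index). *)
Inductive btree : Type :=
| Leaf : btree
| Node : btree -> btree -> btree.

Fixpoint leaves (t : btree) : nat :=
  match t with
  | Leaf => 1
  | Node l r => leaves l + leaves r
  end.

Definition absdiff (a b : nat) : nat := (a - b) + (b - a).

Fixpoint colless (t : btree) : nat :=
  match t with
  | Leaf => 0
  | Node l r => absdiff (leaves l) (leaves r) + colless l + colless r
  end.

Definition colless_attained (n c : nat) : Prop :=
  exists t : btree, leaves t = n /\ colless t = c.

Definition colless_attainedb (n c : nat) : bool :=
  if excluded_middle_informative (colless_attained n c) then true else false.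

Fixpoint caterpillar (k : nat) : btree :=
  match k with
  | 0 => Leaf
  | k'.+1 => Node (caterpillar k') Leaf
  end.

Lemma leaves_caterpillar k : leaves (caterpillar k) = k.+1.
Proof. by elim: k => //= k ->; rewrite addn1. Qed.

Lemma colless_attained_ex n : exists c, colless_attainedb n.+1 c.
Proof.
exists (colless (caterpillar n)); rewrite /colless_attainedb.
case: excluded_middle_informative => // H; exfalso; apply: H.
by exists (caterpillar n); rewrite leaves_caterpillar.
Qed.

(* c_n = min { C(T) : T has n leaves }, for n >= 1 (c_0 := 0, unused) *)
Definition cmin (n : nat) : nat :=
  match n with
  | 0 => 0
  | n'.+1 => ex_minn (colless_attained_ex n')
  end.

From mathcomp Require Import all_boot.
From mathcomp Require Import zify.
From Stdlib Require Import ClassicalEpsilon.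
Set Implicit Arguments. Unset Strict Implicit. Unset Printing Implicit Defensive.

(* The minimal Colless index c_n is computed by the recursion of the maximally
   balanced tree:  c_1 = 0,  c_(2x) = 2 c_x,  c_(2x+1) = c_x + c_(x+1) + 1.
   We define this recursion as a function [bc] (with [bc 0 = 0]) and show
   [cmin n = bc n] for n >= 1:
   - [bc] is attained: splitting n leaves as evenly as possible at every node
     gives a tree of Colless index [bc n];
   - [bc] is a lower bound: the splitting inequality
       bc (a + b) <= |a - b| + bc a + bc b,
     proved by strong induction on a + b and a parity analysis of a and b,
     yields [bc (leaves t) <= colless t] by structural induction on t.
   The four claims are then properties of the recursion: (a) and (d) by
   induction on the exponent m, (c) by induction along halving, and (b) by
   induction on the exponent e, simultaneously with a bound on consecutive
   values [bc x + bc (x + 1)], using that 2^e is never divisible by 3. *)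

Lemma even_or_odd n : exists x, n = 2 * x \/ n = 2 * x + 1.
Proof.
exists n./2; have := odd_double_half n.
by case: (odd n) => /= En; [right | left]; lia.
Qed.

Lemma half_ind (P : nat -> Prop) :
  P 1 ->
  (forall x, 1 <= x -> P x -> P (2 * x)) ->
  (forall x, 1 <= x -> P x -> P (x + 1) -> P (2 * x + 1)) ->
  forall n, 1 <= n -> P n.
Proof.
move=> P1 Peven Podd n; have [s] := ubnP n.
elim: s n => // s IH n hs hn.
have [x [En|En]] := even_or_odd n; subst n.
  by apply: Peven; [lia | apply: IH; lia].
have [->|x_gt0] := posnP x; first by rewrite muln0.
by apply: Podd => //; apply: IH; lia.
Qed.

Fixpoint bc_fuel (k n : nat) : nat :=
  if k is k'.+1 then
    if n <= 1 then 0
    else if odd n then bc_fuel k' n./2 + bc_fuel k' n./2.+1 + 1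
    else 2 * bc_fuel k' n./2
  else 0.

Lemma bc_fuel_enough k k' n : n <= k -> n <= k' -> bc_fuel k n = bc_fuel k' n.
Proof.
elim: k k' n => [|k IH] [|k'] n hk hk' //=; try by case: n hk hk' => [|[]].
case: ifP => // n_gt1; have := odd_double_half n.
by case: (odd n) => /= En; rewrite ?(IH k') //; lia.
Qed.

(* [bc n] : the Colless index of the maximally balanced tree with n leaves. *)
Definition bc n := bc_fuel n n.

Lemma bc_fuelE k n : n <= k -> bc_fuel k n = bc n.
Proof. by move=> hk; apply: bc_fuel_enough. Qed.

Lemma bc0 : bc 0 = 0. Proof. by []. Qed.
Lemma bc1 : bc 1 = 0. Proof. by []. Qed.

Lemma bc_unfold n : 2 <= n ->
  bc n = if odd n then bc n./2 + bc n./2.+1 + 1 else 2 * bc n./2.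
Proof.
case: n => [|n] // n_ge2; rewrite [bc n.+1]/bc [LHS]/= ifN; last lia.
rewrite -[odd n.+1]/(~~ odd n) -[n.+1./2]/(uphalf n) uphalf_half.
by have := odd_double_half n; case: (odd n) => /= En; rewrite !bc_fuelE //; lia.
Qed.

Lemma half_mul2 x : (2 * x)./2 = x.
Proof. by rewrite mul2n doubleK. Qed.

Lemma bc_double x : bc (2 * x) = 2 * bc x.
Proof.
case: x => [|x] //; rewrite bc_unfold; last lia.
by rewrite oddM andFb half_mul2.
Qed.

(* The odd recursion, uniform in x: the correction [minn x 1] accounts for
   bc 1 = 0. *)
Lemma bc_odd x : bc (2 * x + 1) = bc x + bc (x + 1) + minn x 1.
Proof.
case: x => [|x] //; rewrite bc_unfold; last lia.
rewrite addn1 oddS -[(2 * x.+1).+1./2]/(uphalf (2 * x.+1)) uphalf_half.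
by rewrite oddM [odd 2]/= add0n half_mul2 !addn1.
Qed.

Lemma bc_split a b : bc (a + b) <= absdiff a b + bc a + bc b.
Proof.
have [s] := ubnP (a + b); elim: s a b => // s IH a b hs.
have [->|a_gt0] := posnP a; first by rewrite bc0 add0n /absdiff; lia.
have [->|b_gt0] := posnP b; first by rewrite bc0 addn0 /absdiff; lia.
rewrite /absdiff in IH *.
wlog par : a b hs a_gt0 b_gt0 / ~~ odd a || odd b.
  move=> W; case: (boolP (odd b)) => [b_odd|b_even].
    by apply: W; rewrite ?b_odd ?orbT.
  have := W b a; rewrite [b + a]addnC b_even => /(_ hs b_gt0 a_gt0 isT).
  by rewrite [a + b]addnC; lia.
have [x [Ea|Ea]] := even_or_odd a; have [y [Eb|Eb]] := even_or_odd b; subst a b.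
- have -> : 2 * x + 2 * y = 2 * (x + y) by lia.
  rewrite !bc_double; have := IH x y; lia.
- (* b = 1 is bounded via the split (x, 1) of x + 1. *)
  have [-> | y_gt0] := posnP y.
    rewrite muln0 add0n bc1 addn0 bc_odd bc_double.
    have := IH x 1; rewrite bc1; lia.
  have -> : 2 * x + (2 * y + 1) = 2 * (x + y) + 1 by lia.
  rewrite !bc_odd bc_double.
  have := IH x y; have := IH x (y + 1); rewrite addnA; lia.
- by move: par; rewrite oddD !oddM.
- (* a = b = 1 is checked directly; otherwise both splits of x + y + 1 apply. *)
  have [[-> ->] | xy_gt0] : (x = 0 /\ y = 0) \/ 0 < x + y by lia.
    by [].
  have -> : 2 * x + 1 + (2 * y + 1) = 2 * (x + y + 1) by lia.
  rewrite !bc_odd bc_double.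
  have := IH x (y + 1); have := IH (x + 1) y; rewrite addnA addnAC; lia.
Qed.

Lemma bc_le_colless t : bc (leaves t) <= colless t.
Proof.
elim: t => [|l IHl r IHr] //=.
by have := bc_split (leaves l) (leaves r); lia.
Qed.

Lemma bc_attained n : 1 <= n -> colless_attained n (bc n).
Proof.
move: n; apply: half_ind
  => [|x _ [t [lt ct]] | x x_gt0 [t [lt ct]] [t' [lt' ct']]].
- by exists Leaf.
- by exists (Node t t); rewrite /= lt ct bc_double /absdiff subnn; lia.
- exists (Node t' t); rewrite /= lt ct lt' ct' bc_odd /absdiff; lia.
Qed.

Lemma colless_attainedbP n c :
  reflect (colless_attained n c) (colless_attainedb n c).
Proof.
rewrite /colless_attainedb.
by case: excluded_middle_informative => h; constructor.
Qed.

Lemma cminE n : 1 <= n -> cmin n = bc n.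
Proof.
case: n => [|n] // _; rewrite /cmin.
case: ex_minnP => c /colless_attainedbP [t [lt ct]] c_min.
apply/eqP; rewrite eqn_leq; apply/andP; split.
  by apply/c_min/colless_attainedbP/bc_attained.
by rewrite -ct -lt bc_le_colless.
Qed.

Lemma bc_pow2 m : bc (2 ^ m) = 0.
Proof. by elim: m => // m IH; rewrite expnS bc_double IH. Qed.

Lemma bc_pow2_succ m : bc (2 ^ m + 1) = m.
Proof.
elim: m => // m IH; have pow_gt0 : 0 < 2 ^ m by rewrite expn_gt0.
by rewrite expnS bc_odd bc_pow2 IH; lia.
Qed.

Lemma bc_lt_half n : 1 <= n -> 2 * bc n < n.
Proof.
move: n; apply: half_ind => [|x _ IHx | x x_gt0 IHx IHx1] //.
- by rewrite bc_double; lia.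
- by rewrite bc_odd; lia.
Qed.

Lemma bc_sym m p : p <= 2 ^ m -> bc (2 ^ m + p) = bc (2 ^ m.+1 - p).
Proof.
elim: m p => [|m IH] p hp; first by case: p hp => [|[|]].
have pow_gt0 : 0 < 2 ^ m by rewrite expn_gt0.
rewrite !expnS in IH hp *.
have [q [Ep|Ep]] := even_or_odd p; subst p.
  have -> : 2 * 2 ^ m + 2 * q = 2 * (2 ^ m + q) by lia.
  have -> : 2 * (2 * 2 ^ m) - 2 * q = 2 * (2 * 2 ^ m - q) by lia.
  by rewrite !bc_double IH //; lia.
have -> : 2 * 2 ^ m + (2 * q + 1) = 2 * (2 ^ m + q) + 1 by lia.
have -> : 2 * (2 * 2 ^ m) - (2 * q + 1) = 2 * (2 * 2 ^ m - q - 1) + 1 by lia.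
rewrite !bc_odd -(addnA _ q) !IH; try lia.
have -> : 2 * 2 ^ m - q - 1 + 1 = 2 * 2 ^ m - q by lia.
have -> : 2 * 2 ^ m - (q + 1) = 2 * 2 ^ m - q - 1 by lia.
lia.
Qed.

(* 2^e is never divisible by 3, so multiples of 3 stay one unit away from it;
   the induction for claim (b) needs this slack. *)
Lemma pow2_mod3 e : 2 ^ e %% 3 != 0.
Proof. by rewrite -/(dvdn 3 _) Euclid_dvdX. Qed.

(* Claim (b), on the dyadic range [1, 2^e], proved jointly with a bound on two
   consecutive values (needed for odd arguments). *)
Lemma bc_pow2_bound e :
  (forall n, 1 <= n <= 2 ^ e -> 3 * bc n < 2 ^ e) /\
  (forall x, 1 <= x < 2 ^ e -> 3 * (bc x + bc (x + 1)) + 4 <= 2 ^ e.+1).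
Proof.
elim: e => [|e [IHval IHpair]].
  by split=> [n|x]; [case: n => [|[]] | lia].
have mod3 := pow2_mod3 e; rewrite !expnS in IHpair *.
split=> [n hn | x hx].
- have [y [En|En]] := even_or_odd n; subst n.
    by have := IHval y; rewrite bc_double; lia.
  have [->|y_gt0] := posnP y; first by rewrite muln0 bc1; lia.
  by have := IHpair y; rewrite bc_odd; lia.
- have [y [Ex|Ex]] := even_or_odd x; subst x.
    have := IHval y; have := IHpair y; rewrite bc_double bc_odd; lia.
  have -> : 2 * y + 1 + 1 = 2 * (y + 1) by lia.
  have [->|y_gt0] := posnP y.
    have -> : bc (2 * 0 + 1) + bc (2 * (0 + 1)) = 0 by [].
    have : 0 < 2 ^ e by rewrite expn_gt0.
    lia.
  have := IHval (y + 1); have := IHpair y; rewrite bc_double bc_odd; lia.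
Qed.

Theorem corollary5 :
  (forall m : nat, cmin (2 ^ m + 1) = m) /\
  (forall n : nat, 1 <= n -> 3 * cmin n < 2 ^ up_log 2 n) /\
  (forall n : nat, 1 <= n -> 2 * cmin n < n) /\
  (forall m p : nat, 1 <= m -> 1 <= p <= 2 ^ m - 1 ->
     cmin (2 ^ m + p) = cmin (2 ^ m.+1 - p)).
Proof.
split; [|split; [|split]].
- by move=> m; rewrite cminE ?bc_pow2_succ // addn1.
- move=> n n_gt0; rewrite cminE //; apply: (bc_pow2_bound _).1.
  by rewrite n_gt0 up_logP.
- by move=> n n_gt0; rewrite cminE // bc_lt_half.
- move=> m p _ hp; have pow_gt0 : 0 < 2 ^ m by rewrite expn_gt0.
  by rewrite !cminE ?bc_sym // ?expnS; lia.
Qed.
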